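(* Let $n\geq 3$ and let $W_n=K_1\vee C_n$ be the wheel of order $n+1$. Then $\gamma_{sR}(W_4)=2$, and $\gamma_{sR}(W_n)=1$ for every $n\neq 4$.
   Context: $C_n$ denotes the cycle on $n$ vertices and $K_1$ the one-vertex graph. The join $G_1\vee G_2$ of two graphs has vertex set $V(G_1)\cup V(G_2)$ (disjoint union) and edge set $E(G_1)\cup E(G_2)\cup\{uv: u\in V(G_1), v\in V(G_2)\}$. For a graph $G=(V,E)$ and $x\in V$, $N_G[x]=\{x\}\cup\{y: xy\in E\}$. A signed Roman dominating function (SRDF) on $G$ is a function $f:V\to\{-1,1,2\}$ such that (a) $\sum_{y\in N_G[x]}f(y)\geq 1$ for every $x\in V$, and (b) every vertex $x$ with $f(x)=-1$ is adjacent to at least one vertex $y$ with $f(y)=2$. The weight of $f$ is $\sum_{x\in V}f(x)$, and $\gamma_{sR}(G)$ is the minimum weight of an SRDF on $G$. *)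

From mathcomp Require Import all_boot all_order all_algebra.
Set Implicit Arguments. Unset Strict Implicit. Unset Printing Implicit Defensive.
Import Order.TTheory GRing.Theory Num.Theory.
Local Open Scope ring_scope.

(* A (simple) graph on a finite vertex type V is given by its adjacency
   relation adj : rel V (symmetric, irreflexive for the graphs below). *)

Definition cycle_adj (n : nat) : rel 'I_n :=
  fun i j => (val j == (val i).+1 %% n)%N || (val i == (val j).+1 %% n)%N.

Definition K1_adj : rel unit := fun _ _ => false.

Definition join_adj (V1 V2 : finType) (e1 : rel V1) (e2 : rel V2) : rel (V1 + V2) :=
  fun u v => match u, v with
             | inl x, inl y => e1 x y
             | inr x, inr y => e2 x y
             | _, _ => true
             end.

Definition wheel_adj (n : nat) : rel (unit + 'I_n) := join_adj K1_adj (@cycle_adj n).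

Definition closed_nbhd (V : finType) (adj : rel V) (x : V) : {set V} :=
  [set y | (y == x) || adj x y].

Definition is_SRDF (V : finType) (adj : rel V) (f : V -> int) : Prop :=
  (forall x, f x \in [:: -1; 1; 2]) /\
  (forall x, 1 <= \sum_(y in closed_nbhd adj x) f y) /\
  (forall x, f x = -1 -> exists y, adj x y /\ f y = 2).

Definition weight (V : finType) (f : V -> int) : int := \sum_(x : V) f x.

Definition gamma_sR_is (V : finType) (adj : rel V) (k : int) : Prop :=
  (exists f, is_SRDF adj f /\ weight f = k) /\
  (forall f, is_SRDF adj f -> k <= weight f).

From mathcomp Require Import all_boot all_order all_algebra zify.
Set Implicit Arguments. Unset Strict Implicit. Unset Printing Implicit Defensive.
Import Order.TTheory GRing.Theory Num.Theory.
Local Open Scope ring_scope.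

(* The hub is adjacent to every vertex, so its closed-neighbourhood condition
   already says that every SRDF has weight at least 1.  Weight 1 is reached by
   putting 2 on the hub and a pattern of -1's and 1's (and one 2 for even n)
   on the rim that has total -1 and no three consecutive -1's, which keeps
   every rim neighbourhood sum at least 1; such a pattern exists for every
   n <> 4.  In W_4 the closed neighbourhood of a rim vertex misses only the
   opposite rim vertex, so an SRDF of weight 1 would force -1 on the whole
   rim, and then the weight is at most 2 - 4. *)

Lemma SRDF_weight_ge1 (V : finType) (adj : rel V) (x : V) (f : V -> int) :
  (forall y, y \in closed_nbhd adj x) -> is_SRDF adj f -> 1 <= weight f.
Proof.
move=> univ_x [_ [nbhd_ge1 _]].
by rewrite /weight -(eq_bigl _ _ univ_x); exact: nbhd_ge1.
Qed.

Lemma SRDF_le2 (V : finType) (adj : rel V) (f : V -> int) x :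
  is_SRDF adj f -> f x <= 2.
Proof. by case=> /(_ x) + _; rewrite !inE => /or3P[] /eqP->. Qed.

Lemma SRDF_le0_eqN1 (V : finType) (adj : rel V) (f : V -> int) x :
  is_SRDF adj f -> f x <= 0 -> f x = -1.
Proof. by case=> /(_ x) + _; rewrite !inE => /or3P[] /eqP->. Qed.

Lemma sum_setC1 (V : finType) (f : V -> int) (a : V) :
  \sum_(y in [set x | x != a]) f y = weight f - f a.
Proof.
rewrite /weight [in RHS](bigD1 a) //= addrC addrK.
by apply: eq_bigl => x; rewrite inE.
Qed.

Lemma wheel_hub_universal n (y : unit + 'I_n) :
  y \in closed_nbhd (@wheel_adj n) (inl tt).
Proof. by case: y => [[]|j]; rewrite !inE. Qed.

Lemma wheel_weightE n (f : unit + 'I_n -> int) :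
  weight f = f (inl tt) + \sum_(j < n) f (inr j).
Proof.
rewrite /weight big_sumType /=; congr (_ + _).
by rewrite (big_pred1 tt) // => -[].
Qed.

Lemma val_ordS n (i : 'I_n) : val (ordS i) = if i.+1 == n then 0%N else i.+1.
Proof.
rewrite /=; have := ltn_ord i; case: eqP => [->|ne] lt; first by rewrite modnn.
by rewrite modn_small //; lia.
Qed.

Lemma val_ord_pred n (i : 'I_n) :
  val (ord_pred i) = if i == 0%N :> nat then n.-1 else i.-1.
Proof.
rewrite /=; have := ltn_ord i; case: i => [[|k] lt] /= _.
  by rewrite add0n modn_small //; lia.
by rewrite modnDr modn_small //; lia.
Qed.

Lemma wheel_rim_nbhd n (i : 'I_n) :
  closed_nbhd (@wheel_adj n) (inr i) =
  inl tt |: (inr i |: (inr (ordS i) |: [set inr (ord_pred i)])).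
Proof.
apply/setP => -[[]|j]; rewrite !inE //=.
have inr_eq (a b : 'I_n) : (inr a == inr b :> unit + 'I_n) = (a == b) by [].
rewrite !inr_eq -[cycle_adj i j]/((j == ordS i) || (i == ordS j)).
have pred_eq : (i == ordS j) = (j == ord_pred i).
  by apply/eqP/eqP => [->|->]; rewrite ?ordSK ?ord_predK.
by rewrite pred_eq orbA.
Qed.

Lemma wheel_rim_sum n (f : unit + 'I_n -> int) (i : 'I_n) : (2 < n)%N ->
  \sum_(y in closed_nbhd (@wheel_adj n) (inr i)) f y =
  f (inl tt) + (f (inr i) + (f (inr (ordS i)) + f (inr (ord_pred i)))).
Proof.
move=> n_gt2; have i_lt := ltn_ord i.
have i_ordS : i != ordS i.
  by apply/negP => /eqP /(congr1 val); rewrite val_ordS; case: eqP => /=; lia.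
have i_pred : i != ord_pred i.
  by apply/negP => /eqP /(congr1 val); rewrite val_ord_pred; case: eqP => /=; lia.
have ordS_pred : ordS i != ord_pred i.
  apply/negP => /eqP /(congr1 val); rewrite val_ordS val_ord_pred.
  by case: eqP; case: eqP => /=; lia.
have inr_eq (a b : 'I_n) : (inr a == inr b :> unit + 'I_n) = (a == b) by [].
rewrite wheel_rim_nbhd !big_setU1 ?big_set1 // !inE ?inr_eq //.
by rewrite negb_or i_ordS i_pred.
Qed.

Lemma wheel4_rim_nbhd (j : 'I_4) :
  closed_nbhd (@wheel_adj 4) (inr (ordS (ordS j))) = [set x | x != inr j].
Proof.
apply/setP => x; rewrite !inE.
by case: x => [[]|[[|[|[|[|//]]]] ?]]; case: j => [[|[|[|[|//]]]] ?].
Qed.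

Lemma wheel4_weight_ge2 (f : unit + 'I_4 -> int) :
  is_SRDF (@wheel_adj 4) f -> 2 <= weight f.
Proof.
move=> f_SRDF; have w_ge1 := SRDF_weight_ge1 (@wheel_hub_universal 4) f_SRDF.
rewrite leNgt; apply/negP => w_lt2.
have rim_neg1 (j : 'I_4) : f (inr j) = -1.
  apply: (SRDF_le0_eqN1 (x := inr j) f_SRDF).
  have := f_SRDF.2.1 (inr (ordS (ordS j))).
  by rewrite wheel4_rim_nbhd sum_setC1; lia.
have := SRDF_le2 (inl tt) f_SRDF.
move: w_ge1; rewrite wheel_weightE (eq_bigr _ (fun j _ => rim_neg1 j)).
by rewrite big_const_ord /=; lia.
Qed.

Definition hub2 n (g : nat -> int) : unit + 'I_n -> int :=
  fun x => if x is inr j then g j else 2.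

Lemma hub2_weight n g : weight (@hub2 n g) = 2 + \sum_(0 <= j < n) g j.
Proof. by rewrite wheel_weightE big_mkord. Qed.

Lemma hub2_SRDF n (g : nat -> int) : (2 < n)%N ->
  (forall j, g j \in [:: -1; 1; 2]) -> -1 <= \sum_(0 <= j < n) g j ->
  (forall i, (i < n)%N -> -1 <= g (if i == 0%N then n.-1 else i.-1) + g i
                                + g (if i.+1 == n then 0%N else i.+1)) ->
  is_SRDF (@wheel_adj n) (@hub2 n g).
Proof.
move=> n_gt2 g_val g_sum g_window; split; [|split].
- by case=> [[]|j] //=; apply: g_val.
- case=> [[]|j].
    rewrite (eq_bigl _ _ (@wheel_hub_universal n)) -/(weight _) hub2_weight.
    by lia.
  rewrite wheel_rim_sum // /hub2 val_ordS val_ord_pred.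
  by have := g_window j (ltn_ord j); lia.
- by case=> [_|j] //= _; exists (inl tt).
Qed.

Definition alternating (j : nat) : int := if odd j then 1 else -1.

Lemma alternating_sum n : \sum_(0 <= j < n) alternating j = - (odd n)%:Z.
Proof.
elim: n => [|n IH]; first by rewrite big_geq.
by rewrite big_nat_recr //= IH /alternating; case: odd.
Qed.

Lemma alternating_SRDF n :
  (2 < n)%N -> is_SRDF (@wheel_adj n) (@hub2 n alternating).
Proof.
move=> n_gt2; apply: hub2_SRDF => //.
- by move=> j; rewrite /alternating; case: odd.
- by rewrite alternating_sum; case: odd.
- case=> [|i] i_lt /=; case: eqP => [n_eq|_]; rewrite /alternating /=; try lia.
  all: by case: odd.
Qed.

(* The rim pattern 2, -1, -1, 1, -1, -1, 1, -1, 1, ..., -1. *)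
Definition even_rim (j : nat) : int :=
  if j == 0%N then 2 else if j == 3%N then 1
  else if (j <= 4)%N then -1 else - alternating j.

Lemma even_rim_sum k : \sum_(0 <= j < 6 + k.*2) even_rim j = -1.
Proof.
elim: k => [|k IH]; first by rewrite !big_nat_recr //= big_geq.
rewrite doubleS !addnS big_nat_recr // big_nat_recr //= IH.
by rewrite /even_rim /alternating /= odd_double.
Qed.

Lemma even_rim_SRDF k :
  is_SRDF (@wheel_adj (6 + k.*2)) (@hub2 (6 + k.*2) even_rim).
Proof.
have even_rim_val j : even_rim j \in [:: -1; 1; 2].
  by rewrite /even_rim /alternating; do 2?case: eqP => _ //; case: leqP; case: odd.
have even_rim_ge j : -1 <= even_rim j.
  by have := even_rim_val j; rewrite !inE => /or3P[] /eqP->.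
apply: hub2_SRDF => //; first by rewrite even_rim_sum.
case=> [|i] i_lt /=.
  have := even_rim_ge (5 + k.*2)%N; rewrite -[even_rim 0]/2 -[even_rim 1]/(-1).
  by lia.
case: eqP => [_|_].
  by have := even_rim_ge i; have := even_rim_ge i.+1; rewrite -[even_rim 0]/2; lia.
do 5?[case: i i_lt => [|i] i_lt; first by []].
by rewrite /even_rim /alternating /=; case: odd.
Qed.

Local Close Scope ring_scope.

Theorem mainTheorem12 :
  gamma_sR_is (@wheel_adj 4) 2%:Z /\
  (forall n : nat, 3 <= n -> n <> 4 -> gamma_sR_is (@wheel_adj n) 1%:Z).
Proof.
split.
  split; last exact: wheel4_weight_ge2.
  exists (@hub2 4 alternating); split; first exact: alternating_SRDF.
  by rewrite hub2_weight alternating_sum.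
move=> n n_ge3 n_ne4; split; last first.
  by move=> f; apply: SRDF_weight_ge1; exact: wheel_hub_universal.
have [n_odd|n_even] := boolP (odd n).
  exists (@hub2 n alternating); split; first exact: alternating_SRDF.
  by rewrite hub2_weight alternating_sum n_odd.
have [k ->] : exists k, n = 6 + k.*2.
  by exists (n./2 - 3); move: n_even; rewrite -[n in odd n]odd_double_half; lia.
exists (@hub2 (6 + k.*2) even_rim); split; first exact: even_rim_SRDF.
by rewrite hub2_weight even_rim_sum.
Qed.
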